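(* Consider the algorithm described in the context applied to the problem described there. (i) If the algorithm terminates at iteration $k$ because $J_k^Tc_k=0$ and $c_k\neq 0$, then $x_k$ is an infeasible stationary point, i.e., $c_k\neq0$ and $J_k^Tc_k=0$. (ii) If the algorithm terminates at iteration $k$ because $s_k=0$, then $x_k$ is a first-order KKT point of the problem, i.e., $c(x_k)=0$ and there exist $y\in\mathbb{R}^m$ and $g_r\in\partial r(x_k)$ with $\nabla f(x_k)+g_r-J(x_k)^Ty=0$.
   Context: Problem: $\min_{x\in\mathbb{R}^n} f(x)+r(x)$ subject to $c(x)=0$, where $f:\mathbb{R}^n\to\mathbb{R}$ and $c:\mathbb{R}^n\to\mathbb{R}^m$ ($m\le n$) are continuously differentiable and $r:\mathbb{R}^n\to\mathbb{R}_{\ge 0}$ is convex. Write $g(x)=\nabla f(x)$, $J(x)=\nabla c(x)^T$, and $f_k=f(x_k)$, $g_k=g(x_k)$, $c_k=c(x_k)$, $J_k=J(x_k)$, $r_k=r(x_k)$. All norms are Euclidean. Algorithm: inputs $x_0$, $\alpha_0>0$, $\tau_{-1}>0$; constants $\kappa_v>0$, $\sigma_c,\epsilon_\tau,\xi,\eta\in(0,1)$, $\sigma_u\in(0,1/2]$, $\bar\sigma_u:=\sigma_u+\tfrac12$. For $k=0,1,\dots$: 1. If $J_k^Tc_k\ne0$, compute $v_k$ with $v_k\in\mathrm{Range}(J_k^T)$, $\|v_k\|_2\le\kappa_v\alpha_k\|J_k^Tc_k\|_2$, $\|c_k+J_kv_k\|_2\le\|c_k+J_kv_k^c\|_2$,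 where $v_k^c=-\beta_k^cJ_k^Tc_k$ with $\beta_k^c$ minimizing $\tfrac12\|c_k-\beta J_kJ_k^Tc_k\|_2^2$ over $0\le\beta\le\kappa_v\alpha_k$. Otherwise set $v_k=0$, and if $c_k\ne0$ terminate returning $x_k$. 2. Let $u_k$ be the unique minimizer of $g_k^Tu+\tfrac1{2\alpha_k}\|u\|_2^2+r(x_k+v_k+u)$ subject to $J_ku=0$; set $s_k=v_k+u_k$. If $s_k=0$, terminate returning $x_k$. 3. Let $D_k:=g_k^Ts_k+\bar\sigma_u\|s_k\|_2^2/\alpha_k+r(x_k+s_k)-r_k$; $\tau_{k,\mathrm{trial}}=\infty$ if $D_k\le0$, else $\tau_{k,\mathrm{trial}}=(1-\sigma_c)(\|c_k\|_2-\|c_k+J_kv_k\|_2)/D_k$. Set $\tau_k=\tau_{k-1}$ if $\tau_{k-1}\le\tau_{k,\mathrm{trial}}$, else $\tau_k=\min\{(1-\epsilon_\tau)\tau_{k-1},\tau_{k,\mathrm{trial}}\}$. 4. With $\Delta q_k(s,\tau):=-\tau(g_k^Ts+\tfrac1{2\alpha_k}\|s\|_2^2+r(x_k+s)-r_k)+\|c_k\|_2-\|c_k+J_ks\|_2$ and merit function $\Phi_\tau(x)=\tau(f(x)+r(x))+\|c(x)\|_2$: if $\Phi_{\tau_k}(x_k+s_k)\le\Phi_{\tau_k}(x_k)-\eta\Delta q_k(s_k,\tau_k)$ set $x_{k+1}=x_k+s_k$, $\alpha_{k+1}=\alpha_k$; else $x_{k+1}=x_k$, $\alpha_{k+1}=\xi\alpha_k$.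 Standing assumption: there is an open convex set $\mathcal X$ containing all iterates and trial points on which $f$ is bounded below, $\nabla f$ is bounded and Lipschitz, $c$ and $J$ are bounded, $J$ is Lipschitz, and the subdifferential of $r$ is bounded. *)

From mathcomp Require Import all_boot all_algebra.
From mathcomp Require Import all_classical all_reals all_analysis.
Set Implicit Arguments. Unset Strict Implicit. Unset Printing Implicit Defensive.
Import GRing.Theory Num.Theory.
Import numFieldNormedType.Exports.
Local Open Scope classical_set_scope.
Local Open Scope ring_scope.

Section Defs.
Variable R : realType.

Definition dot (p : nat) (u w : 'cV[R]_p) : R := (u^T *m w) 0 0.
Definition norm2 (p : nat) (w : 'cV[R]_p) : R := Num.sqrt (\sum_(i < p) w i 0 ^+ 2).

Definition convex_fun (p : nat) (r : 'cV[R]_p -> R) : Prop :=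
  forall (x y : 'cV[R]_p) (t : R), 0 <= t -> t <= 1 ->
    r ((1 - t) *: x + t *: y) <= (1 - t) * r x + t * r y.
Definition convex_set (p : nat) (X : set 'cV[R]_p) : Prop :=
  forall (x y : 'cV[R]_p) (t : R), X x -> X y -> 0 <= t -> t <= 1 ->
    X ((1 - t) *: x + t *: y).

Definition subdiff (p : nat) (r : 'cV[R]_p -> R) (x gr : 'cV[R]_p) : Prop :=
  forall y : 'cV[R]_p, r x + dot gr (y - x) <= r y.

Definition C1_grad (p : nat) (f : 'cV[R]_p -> R^o) (g : 'cV[R]_p -> 'cV[R]_p) : Prop :=
  (forall x : 'cV[R]_p, differentiable f x /\
     ('d f x : 'cV[R]_p -> R^o) = (fun h : 'cV[R]_p => dot (g x) h)) /\
  continuous g.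

Definition C1_jac (p q : nat) (c : 'cV[R]_p -> 'cV[R]_q)
    (J : 'cV[R]_p -> 'M[R]_(q, p)) : Prop :=
  (forall x : 'cV[R]_p, differentiable c x /\
     ('d c x : 'cV[R]_p -> 'cV[R]_q) = (fun h : 'cV[R]_p => J x *m h)) /\
  continuous J.

Section Algo.
Variables (n m : nat).
Variables (f : 'cV[R]_n -> R^o) (g : 'cV[R]_n -> 'cV[R]_n)
          (c : 'cV[R]_n -> 'cV[R]_m) (J : 'cV[R]_n -> 'M[R]_(m, n))
          (r : 'cV[R]_n -> R).

Definition JTc (x : 'cV[R]_n) : 'cV[R]_n := (J x)^T *m c x.

Definition step1_terminates (x : 'cV[R]_n) : Prop := JTc x = 0 /\ c x <> 0.

Definition v_spec (kappa_v alpha : R) (x v : 'cV[R]_n) : Prop :=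
  (JTc x <> 0 ->
     (exists w : 'cV[R]_m, v = (J x)^T *m w) /\
     norm2 v <= kappa_v * alpha * norm2 (JTc x) /\
     exists beta_c : R,
       0 <= beta_c /\ beta_c <= kappa_v * alpha /\
       (forall beta : R, 0 <= beta -> beta <= kappa_v * alpha ->
          (1/2) * norm2 (c x - beta *: (J x *m JTc x)) ^+ 2
          >= (1/2) * norm2 (c x - beta_c *: (J x *m JTc x)) ^+ 2) /\
       norm2 (c x + J x *m v) <= norm2 (c x + J x *m (- beta_c *: JTc x))) /\
  (JTc x = 0 -> v = 0).

Definition u_obj (alpha : R) (x v w : 'cV[R]_n) : R :=
  dot (g x) w + (1 / (2 * alpha)) * norm2 w ^+ 2 + r (x + v + w).
Definition u_spec (alpha : R) (x v u : 'cV[R]_n) : Prop :=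
  J x *m u = 0 /\
  (forall w : 'cV[R]_n, J x *m w = 0 -> u_obj alpha x v u <= u_obj alpha x v w) /\
  (forall w : 'cV[R]_n, J x *m w = 0 ->
     (forall w', J x *m w' = 0 -> u_obj alpha x v w <= u_obj alpha x v w') -> w = u).

Definition D_val (sigma_u alpha : R) (x s : 'cV[R]_n) : R :=
  dot (g x) s + (sigma_u + 1/2) * norm2 s ^+ 2 / alpha + r (x + s) - r x.
(* None encodes tau_trial = +infinity *)
Definition tau_trial (sigma_c sigma_u alpha : R) (x v s : 'cV[R]_n) : option R :=
  if D_val sigma_u alpha x s <= 0 then None
  else Some ((1 - sigma_c) * (norm2 (c x) - norm2 (c x + J x *m v))
             / D_val sigma_u alpha x s).
Definition tau_update (eps_tau tau_prev : R) (trial : option R) : R :=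
  match trial with
  | None => tau_prev
  | Some t => if tau_prev <= t then tau_prev
              else Num.min ((1 - eps_tau) * tau_prev) t
  end.

Definition delta_q (alpha tau : R) (x s : 'cV[R]_n) : R :=
  - tau * (dot (g x) s + (1 / (2 * alpha)) * norm2 s ^+ 2 + r (x + s) - r x)
  + norm2 (c x) - norm2 (c x + J x *m s).
Definition merit (tau : R) (x : 'cV[R]_n) : R := tau * (f x + r x) + norm2 (c x).
Definition step4_spec (eta xi alpha tau : R) (x s x' : 'cV[R]_n) (alpha' : R) : Prop :=
  if merit tau (x + s) <= merit tau x - eta * delta_q alpha tau x s
  then x' = x + s /\ alpha' = alpha
  else x' = x /\ alpha' = xi * alpha.

Definition KKT_point (x : 'cV[R]_n) : Prop :=
  c x = 0 /\
  exists (y : 'cV[R]_m) (gr : 'cV[R]_n),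
    subdiff r x gr /\ g x + gr - (J x)^T *m y = 0.

Definition infeasible_stationary (x : 'cV[R]_n) : Prop := c x <> 0 /\ JTc x = 0.

Definition standing (X : set 'cV[R]_n) : Prop :=
  open X /\ convex_set X /\
  (exists lb : R, forall x, X x -> lb <= f x) /\
  (exists B : R, forall x, X x -> norm2 (g x) <= B) /\
  (exists L : R, forall x y, X x -> X y -> norm2 (g x - g y) <= L * norm2 (x - y)) /\
  (exists B : R, forall x, X x -> norm2 (c x) <= B) /\
  (exists B : R, forall x h, X x -> norm2 (J x *m h) <= B * norm2 h) /\
  (exists L : R, forall x y h, X x -> X y ->
      norm2 ((J x - J y) *m h) <= L * norm2 (x - y) * norm2 h) /\
  (exists B : R, forall x gr, X x -> subdiff r x gr -> norm2 gr <= B).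

End Algo.
End Defs.

(* For (ii), [s_k = 0] forces [u_k = - v_k], hence
   [J_k v_k = 0].  If [J_k^T c_k <> 0], the Cauchy step strictly decreases
   [|c_k|], so a normal step with [J_k v_k = 0] would violate its decrease
   condition; thus [J_k^T c_k = 0], and since step 1 did not terminate,
   [c_k = 0] and [v_k = u_k = 0].  Minimality of [u = 0] in the subproblem,
   tested along [t w] with [t -> 0] to kill the quadratic term, makes the
   convex function [w |-> g_k^T w + r (x_k + w) - r x_k] nonnegative on
   [ker J_k].  A finite-dimensional Hahn-Banach extension of the zero
   functional on [ker J_k] gives a linear minorant of it, which vanishes on
   [ker J_k] and is therefore [w |-> (J_k^T y)^T w]; then [J_k^T y - g_k] is a
   subgradient of [r] at [x_k]. *)

From mathcomp Require Import all_boot all_algebra.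
From mathcomp Require Import all_classical all_reals all_analysis.
From mathcomp Require Import ring lra.
Import GRing.Theory Num.Theory.
Import order.Order.TTheory.
Import numFieldNormedType.Exports.
Local Open Scope classical_set_scope.
Local Open Scope ring_scope.
Set Implicit Arguments. Unset Strict Implicit.

Section Dot.
Variables (R : realType) (n : nat).
Implicit Types u w h : 'cV[R]_n.

Lemma dotE u w : dot u w = \sum_i u i 0 * w i 0.
Proof. by rewrite /dot mxE; apply: eq_bigr => i _; rewrite mxE. Qed.

Lemma dotC u w : dot u w = dot w u.
Proof. by rewrite !dotE; apply: eq_bigr => i _; rewrite mulrC. Qed.

Lemma dotDr h u w : dot h (u + w) = dot h u + dot h w.
Proof. by rewrite !dotE -big_split; apply: eq_bigr => i _; rewrite mxE mulrDr. Qed.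

Lemma dotZr h a u : dot h (a *: u) = a * dot h u.
Proof. by rewrite !dotE mulr_sumr; apply: eq_bigr => i _; rewrite mxE mulrCA. Qed.

Lemma dotBr h u w : dot h (u - w) = dot h u - dot h w.
Proof. by rewrite dotDr -scaleN1r dotZr mulN1r. Qed.

Lemma dot0r h : dot h 0 = 0.
Proof. by rewrite /dot mulmx0 mxE. Qed.

Lemma dotDl h u w : dot (u + w) h = dot u h + dot w h.
Proof. by rewrite dotC dotDr !(dotC h). Qed.

Lemma dotZl h a u : dot (a *: u) h = a * dot u h.
Proof. by rewrite dotC dotZr dotC. Qed.

Lemma dotBl h u w : dot (u - w) h = dot u h - dot w h.
Proof. by rewrite dotC dotBr !(dotC h). Qed.

Lemma dot_ge0 u : 0 <= dot u u.
Proof. by rewrite dotE sumr_ge0 // => i _; rewrite -expr2 sqr_ge0. Qed.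

Lemma dot_eq0 u : (dot u u == 0) = (u == 0).
Proof.
apply/eqP/eqP => [|->]; last exact: dot0r.
have sq_ge0 k : 0 <= u k 0 * u k 0 by rewrite -expr2 sqr_ge0.
rewrite dotE => /psumr_eq0P u0; apply/matrixP => i j; rewrite (ord1 j) mxE.
have /eqP := u0 (fun k _ => sq_ge0 k) i isT.
by rewrite mulf_eq0 orbb => /eqP.
Qed.

Lemma norm2_sq u : norm2 u ^+ 2 = dot u u.
Proof.
rewrite /norm2 sqr_sqrtr; last by rewrite sumr_ge0 // => i _; rewrite sqr_ge0.
by rewrite dotE; apply: eq_bigr => i _; rewrite expr2.
Qed.

Lemma norm2_ge0 u : 0 <= norm2 u.
Proof. exact: sqrtr_ge0. Qed.

Lemma norm20 : norm2 (0 : 'cV[R]_n) = 0.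
Proof. by rewrite /norm2 big1 ?sqrtr0 // => i _; rewrite mxE expr0n. Qed.

Lemma norm2Z_sq a u : norm2 (a *: u) ^+ 2 = a ^+ 2 * norm2 u ^+ 2.
Proof. by rewrite !norm2_sq dotZl dotZr mulrA expr2. Qed.

Lemma dotMr p (A : 'M[R]_(p, n)) (u : 'cV[R]_p) w : dot (A^T *m u) w = dot u (A *m w).
Proof. by rewrite /dot trmx_mul trmxK mulmxA. Qed.

Lemma dot_col k u (B : 'M[R]_(n, k)) j : dot u (col j B) = (u^T *m B) 0 j.
Proof. by rewrite /dot colE mulmxA -colE [LHS]mxE. Qed.

Lemma norm2_sub_scale_lt u d b : 0 < dot u d -> 0 < b ->
  exists2 beta, 0 <= beta <= b & norm2 (u - beta *: d) ^+ 2 < norm2 u ^+ 2.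
Proof.
move=> ud0 b0; have dd1 : 0 < dot d d + 1 by rewrite ltr_wpDl ?dot_ge0.
pose beta := Num.min b (dot u d / (dot d d + 1)).
have beta0 : 0 < beta by rewrite lt_min b0 divr_gt0.
have beta_le : beta * (dot d d + 1) <= dot u d by rewrite -ler_pdivlMr // ge_min lexx orbT.
exists beta; first by rewrite ltW //= ge_min lexx.
rewrite !norm2_sq dotBl !dotBr !dotZl !dotZr (dotC d u).
have := dot_ge0 d; nra.
Qed.

End Dot.

Section Orthogonality.
Variables (R : realType) (p n : nat).
Implicit Types (A : 'M[R]_(p, n)) (e h : 'cV[R]_n).

Lemma exists_orth_dot1 A e : ~~ (e^T <= A)%MS ->
  exists q, (forall s, (s^T <= A)%MS -> dot s q = 0) /\ dot e q = 1.
Proof.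
rewrite submxE => eA.
have /forallPn[j ej] : ~~ [forall j, (e^T *m cokermx A) 0 j == 0].
  apply: contra eA => /forallP e0; apply/eqP/matrixP => i j.
  by rewrite (ord1 i) [RHS]mxE; apply/eqP.
exists ((dot e (col j (cokermx A)))^-1 *: col j (cokermx A)); split.
  by move=> s; rewrite submxE dotZr (dot_col s) => /eqP->; rewrite mxE mulr0.
by rewrite dotZr dot_col mulVf.
Qed.

Lemma orth_ker_submx A h : (forall w, A *m w = 0 -> dot h w = 0) -> (h^T <= A)%MS.
Proof.
move=> hA; rewrite submxE; apply/eqP/matrixP => i j; rewrite (ord1 i) [RHS]mxE.
have Aw : A *m col j (cokermx A) = 0 by rewrite colE mulmxA mulmx_coker mul0mx.
by rewrite -(hA _ Aw) dot_col.
Qed.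

End Orthogonality.

Section DominatedExtension.
Variables (R : realType) (n : nat) (phi : 'cV[R]_n -> R).
Hypothesis phi_convex : convex_fun phi.
Implicit Types (A : 'M[R]_n) (e h s w : 'cV[R]_n).

Definition dominated_on A h := forall w, (w^T <= A)%MS -> dot h w <= phi w.

(* [s + b e] and [s' - a e] average, with weights [a] and [b], to a point of the
   row space of [A], where [h] is below [phi]. *)
Lemma dominated_slope_le A h e s s' a b : dominated_on A h ->
  (s^T <= A)%MS -> (s'^T <= A)%MS -> 0 < a -> 0 < b ->
  (dot h s' - phi (s' - a *: e)) / a <= (phi (s + b *: e) - dot h s) / b.
Proof.
move=> hA sA s'A a0 b0.
have ab0 : 0 < a + b by rewrite addr_gt0.
pose t := b / (a + b).
have t0 : 0 <= t by rewrite divr_ge0 // ltW.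
have t1 : t <= 1 by rewrite ler_pdivrMr // mul1r lerDr ltW.
have avgE : (1 - t) *: (s + b *: e) + t *: (s' - a *: e)
            = (a + b)^-1 *: (a *: s + b *: s').
  by apply/matrixP => i j; rewrite !mxE /t; field; rewrite gt_eqF.
have avgA : (((a + b)^-1 *: (a *: s + b *: s'))^T <= A)%MS.
  rewrite !linearZ /= linearD /= !linearZ /=.
  by apply/scalemx_sub/addmx_sub; apply: scalemx_sub.
have := hA _ avgA; rewrite dotZr dotDr !dotZr => dominated_avg.
have := phi_convex (s + b *: e) (s' - a *: e) t0 t1; rewrite avgE => convex_avg.
have : a * dot h s + b * dot h s' <= a * phi (s + b *: e) + b * phi (s' - a *: e).
  rewrite -(ler_pM2l (_ : 0 < (a + b)^-1)) ?invr_gt0 //.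
  have -> : (a + b)^-1 * (a * phi (s + b *: e) + b * phi (s' - a *: e))
            = (1 - t) * phi (s + b *: e) + t * phi (s' - a *: e).
    by rewrite /t; field; rewrite gt_eqF.
  exact: le_trans dominated_avg convex_avg.
rewrite ler_pdivlMr // mulrAC ler_pdivrMr //; nra.
Qed.

(* The new value [gam] of the functional on [e] is squeezed between the
   slopes of [dominated_slope_le]; [q] carries it without disturbing [A]. *)
Lemma dominated_extend1 A h e : dominated_on A h -> ~~ (e^T <= A)%MS ->
  exists h', (forall w, (w^T <= A)%MS -> dot h' w = dot h w) /\
             dominated_on (A + e^T)%MS h'.
Proof.
move=> hA eA; have [q [qA qe]] := exists_orth_dot1 eA.
pose L := [set y | exists s a, [/\ (s^T <= A)%MS, 0 < a &
                                   y = (dot h s - phi (s - a *: e)) / a]].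
pose gam := sup L.
have A0 : ((0 : 'cV[R]_n)^T <= A)%MS by rewrite linear0 sub0mx.
have gam_le s b : (s^T <= A)%MS -> 0 < b -> gam <= (phi (s + b *: e) - dot h s) / b.
  move=> sA b0; apply: ge_sup; first by exists ((dot h 0 - phi (0 - 1 *: e)) / 1), 0, 1.
  by move=> y [s' [a [s'A a0 ->]]]; apply: dominated_slope_le hA sA s'A a0 b0.
have le_gam s a : (s^T <= A)%MS -> 0 < a -> (dot h s - phi (s - a *: e)) / a <= gam.
  move=> sA a0; apply: sup_upper_bound; last by exists s, a.
  split; first by exists ((dot h s - phi (s - a *: e)) / a), s, a.
  exists ((phi (0 + 1 *: e) - dot h 0) / 1).
  by move=> y [s' [a' [s'A a'0 ->]]]; apply: dominated_slope_le hA A0 s'A a'0 ltr01.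
exists (h + (gam - dot h e) *: q); split.
  by move=> w wA; rewrite dotDl dotZl (dotC q) qA // mulr0 addr0.
move=> w /sub_addsmxP[[u t]] /= wE.
rewrite (mx11_scalar t) mul_scalar_mx in wE.
set s := (u *m A)^T in wE *; set b := t 0 0 in wE *.
have sA : (s^T <= A)%MS by rewrite trmxK submxMl.
have -> : w = s + b *: e by rewrite -[w]trmxK wE linearD /= linearZ /= trmxK.
have -> : dot (h + (gam - dot h e) *: q) (s + b *: e) = dot h s + b * gam.
  by rewrite dotDr dotZr !dotDl !dotZl (dotC q s) qA // (dotC q e) qe; ring.
case: (ltgtP b 0) => [b_lt0|b_gt0|->].
- have := le_gam s (- b) sA; rewrite oppr_gt0 scaleNr opprK => /(_ b_lt0).
  rewrite ler_pdivrMr ?oppr_gt0 //; nra.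
- by have := gam_le s b sA b_gt0; rewrite ler_pdivlMr //; nra.
- by rewrite mul0r addr0 scale0r addr0; apply: hA.
Qed.

Lemma dominated_extend A h : dominated_on A h ->
  exists h', (forall w, (w^T <= A)%MS -> dot h' w = dot h w) /\
             forall w, dot h' w <= phi w.
Proof.
have [d] := ubnP (n - \rank A); elim: d A h => // d IH A h rkA hA.
have [/submx_full Afull | Anfull] := boolP (row_full A).
  by exists h; split => // w; apply: hA; apply: Afull.
have /row_subPn[i eA] : ~~ (1%:M <= A)%MS by rewrite sub1mx.
rewrite -[row i _]trmxK in eA; set e := (row i 1%:M)^T in eA.
have [h1 [h1A h1dom]] := dominated_extend1 hA eA.
have rkAe : (\rank A < \rank (A + e^T)%MS)%N.
  apply: rank_ltmx; rewrite ltmxE addsmxSl /=.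
  by apply: contra eA => /(submx_trans (addsmxSr A _)).
have rkA_lt : (\rank A < n)%N by rewrite ltn_neqAle Anfull rank_leq_col.
have [|h2 [h2A h2dom]] := IH _ h1 _ h1dom.
  by apply: leq_trans (ltn_sub2l rkA_lt rkAe) _; rewrite -ltnS.
exists h2; split => // w wA.
by rewrite h2A ?h1A //; apply: submx_trans wA (addsmxSl _ _).
Qed.

Lemma convex_ge0_on_ker_minorant m (J : 'M[R]_(m, n)) :
  (forall w, J *m w = 0 -> 0 <= phi w) ->
  exists y : 'cV[R]_m, forall w, dot (J^T *m y) w <= phi w.
Proof.
move=> phi_ker.
have kerJ w : (w^T <= kermx J^T)%MS = (J *m w == 0).
  by rewrite sub_kermx -trmx_mul -trmx0 (inj_eq trmx_inj).
have [|h [h0 h_phi]] := @dominated_extend (kermx J^T) 0.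
  by move=> w; rewrite kerJ dotC dot0r => /eqP/phi_ker.
have hJ : (h^T <= J)%MS.
  by apply: orth_ker_submx => w /eqP Jw; rewrite h0 ?kerJ // dotC dot0r.
exists (h^T *m pinvmx J)^T => w.
by rewrite -[J]trmxK -trmx_mul trmxK (mulmxKpV hJ) trmxK.
Qed.

End DominatedExtension.

Section ConvexNonneg.
Variables (R : realType) (n : nat) (phi : 'cV[R]_n -> R).
Hypothesis phi_convex : convex_fun phi.

(* Convexity and [phi 0 = 0] give [phi (t w) <= t phi w], so the perturbation
   [t^2 K] becomes [t K] after division by [t] and vanishes as [t -> 0]. *)
Lemma convex_ge0_of_quadratic_lb w K : phi 0 = 0 ->
  (forall t, 0 < t -> t <= 1 -> - (t ^+ 2 * K) <= phi (t *: w)) -> 0 <= phi w.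
Proof.
move=> phi0 lb; apply/ler_addgt0Pr => eps eps0.
have K1 : 0 < `|K| + 1 by rewrite ltr_wpDl.
pose t := Num.min 1 (eps / (`|K| + 1)).
have t0 : 0 < t by rewrite lt_min ltr01 divr_gt0.
have t1 : t <= 1 by rewrite ge_min lexx.
have tK : t * (`|K| + 1) <= eps by rewrite -ler_pdivlMr // ge_min lexx orbT.
have cvx : phi (t *: w) <= t * phi w.
  by have := phi_convex 0 w (ltW t0) t1; rewrite scaler0 add0r phi0 mulr0 add0r.
have : - (t * K) <= phi w.
  rewrite -(ler_pM2l t0) mulrN mulrA -expr2; exact: le_trans (lb t t0 t1) cvx.
have : t * K <= t * (`|K| + 1) by rewrite ler_pM2l // ler_wpDr // ler_norm.
lra.
Qed.

End ConvexNonneg.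

Section ModelChange.
Variables (R : realType) (n : nat) (r : 'cV[R]_n -> R) (x gx : 'cV[R]_n).

Definition model_change w := dot gx w + r (x + w) - r x.

Lemma model_change0 : model_change 0 = 0.
Proof. by rewrite /model_change dot0r addr0 add0r subrr. Qed.

Lemma convex_model_change : convex_fun r -> convex_fun model_change.
Proof.
move=> r_convex y z t t0 t1; rewrite /model_change.
have -> : x + ((1 - t) *: y + t *: z) = (1 - t) *: (x + y) + t *: (x + z).
  by apply/matrixP => i j; rewrite !mxE; ring.
have := r_convex (x + y) (x + z) t t0 t1.
rewrite dotDr !dotZr; lra.
Qed.

Lemma subdiff_of_model_change_minorant h :
  (forall w, dot h w <= model_change w) -> subdiff r x (h - gx).
Proof.
move=> h_le y; have := h_le (y - x).
rewrite /model_change [x + _]addrC subrK dotBl; lra.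
Qed.

End ModelChange.

Section Iterations.
Variables (R : realType) (n m : nat).
Variables (f : 'cV[R]_n -> R^o) (g : 'cV[R]_n -> 'cV[R]_n)
          (c : 'cV[R]_n -> 'cV[R]_m) (J : 'cV[R]_n -> 'M[R]_(m, n))
          (r : 'cV[R]_n -> R).

Lemma step_sizes_gt0 eta xi (x s : nat -> 'cV[R]_n) (alpha tau : nat -> R) k :
  0 < xi -> 0 < alpha 0%N ->
  (forall j, (j < k)%N -> step4_spec f g c J r eta xi (alpha j) (tau j)
                            (x j) (s j) (x j.+1) (alpha j.+1)) ->
  forall j, (j <= k)%N -> 0 < alpha j.
Proof.
move=> xi0 alpha00 step; elim=> [//|j IH] jk.
have alpha_j0 := IH (ltnW jk).
by move: (step j jk); rewrite /step4_spec; case: ifP => _ [_ ->]; rewrite ?mulr_gt0.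
Qed.

(* By [c^T (J J^T c) = |J^T c|^2 > 0] the Cauchy step strictly decreases
   [|c|], which a normal step with [J v = 0] cannot match. *)
Lemma v_spec_JTc_eq0 kappa_v alpha x v : 0 < kappa_v * alpha ->
  v_spec c J kappa_v alpha x v -> J x *m v = 0 -> JTc c J x = 0.
Proof.
move=> ka0 [vspec _] Jv; have [//|JTc_neq0] := eqVneq (JTc c J x) 0; exfalso.
have [_ [_ [bc [_ [_ [bc_min]]]]]] := vspec (elimN eqP JTc_neq0).
rewrite Jv addr0 -scalemxAr scaleNr => c_le.
have cd0 : 0 < dot (c x) (J x *m JTc c J x).
  by rewrite -dotMr lt_def dot_eq0 JTc_neq0 dot_ge0.
have [beta /andP[beta0 beta_le] lt_c] := norm2_sub_scale_lt cd0 ka0.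
have := bc_min beta beta0 beta_le.
have : norm2 (c x) ^+ 2 <= norm2 (c x - bc *: (J x *m JTc c J x)) ^+ 2.
  by rewrite lerXn2r ?nnegrE ?norm2_ge0.
lra.
Qed.

Lemma u_spec0_model_change_ge0 alpha x : convex_fun r -> 0 < alpha ->
  u_spec g J r alpha x 0 0 ->
  forall w, J x *m w = 0 -> 0 <= model_change r x (g x) w.
Proof.
move=> r_convex alpha0 [_ [u_min _]] w Jw.
apply: (convex_ge0_of_quadratic_lb (convex_model_change x (g x) r_convex)
          (K := (1 / (2 * alpha)) * norm2 w ^+ 2) (model_change0 r x (g x))).
move=> t t0 t1; have Jtw : J x *m (t *: w) = 0 by rewrite -scalemxAr Jw scaler0.
have := u_min _ Jtw; rewrite /u_obj /model_change dot0r norm20 norm2Z_sq !addr0.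
rewrite expr0n /= mulr0 add0r; lra.
Qed.

Lemma u_spec0_subdiff alpha x : convex_fun r -> 0 < alpha ->
  u_spec g J r alpha x 0 0 -> exists y, subdiff r x ((J x)^T *m y - g x).
Proof.
move=> r_convex alpha0 u0.
have [y y_le] := convex_ge0_on_ker_minorant (convex_model_change x (g x) r_convex)
                   (u_spec0_model_change_ge0 r_convex alpha0 u0).
by exists y; apply: subdiff_of_model_change_minorant.
Qed.

End Iterations.

Theorem theorem3p2 (R : realType) (n m : nat) (hmn : (m <= n)%N)
  (f : 'cV[R]_n -> R^o) (g : 'cV[R]_n -> 'cV[R]_n)
  (c : 'cV[R]_n -> 'cV[R]_m) (J : 'cV[R]_n -> 'M[R]_(m, n))
  (r : 'cV[R]_n -> R)
  (Hf : C1_grad f g) (Hc : C1_jac c J)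
  (Hr0 : forall x, 0 <= r x) (Hrc : convex_fun r)
  (x0 : 'cV[R]_n) (alpha0 tau_m1 kappa_v sigma_c eps_tau xi eta sigma_u : R)
  (Halpha0 : 0 < alpha0) (Htau_m1 : 0 < tau_m1) (Hkappa : 0 < kappa_v)
  (Hsc : 0 < sigma_c < 1) (Heps : 0 < eps_tau < 1) (Hxi : 0 < xi < 1)
  (Heta : 0 < eta < 1) (Hsu : 0 < sigma_u <= 1/2)
  (x v u : nat -> 'cV[R]_n) (alpha tau : nat -> R) (k : nat)
  (X : set 'cV[R]_n)
  (Hx0 : x 0%N = x0) (Ha0 : alpha 0%N = alpha0)
  (* step 1 performed at every iteration j <= k *)
  (Hv : forall j, (j <= k)%N -> v_spec c J kappa_v (alpha j) (x j) (v j))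
  (* iterations j < k ran to completion without terminating *)
  (Hrun : forall j, (j < k)%N ->
     ~ step1_terminates c J (x j) /\
     u_spec g J r (alpha j) (x j) (v j) (u j) /\
     v j + u j <> 0 /\
     tau j = tau_update eps_tau (if j is j'.+1 then tau j' else tau_m1)
               (tau_trial g c J r sigma_c sigma_u (alpha j) (x j) (v j) (v j + u j)) /\
     step4_spec f g c J r eta xi (alpha j) (tau j) (x j) (v j + u j)
       (x j.+1) (alpha j.+1))
  (* standing assumption: X contains all iterates and trial points *)
  (HX : standing f g c J r X)
  (HXx : forall j, (j <= k)%N -> X (x j))
  (HXt : forall j, (j < k)%N -> X (x j + (v j + u j))) :
  (* (i) termination in step 1 *)
  (step1_terminates c J (x k) -> infeasible_stationary c J (x k)) /\
  (* (ii) termination in step 2 because s_k = 0 *)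
  (~ step1_terminates c J (x k) ->
   u_spec g J r (alpha k) (x k) (v k) (u k) ->
   X (x k + (v k + u k)) ->
   v k + u k = 0 ->
   KKT_point g c J r (x k)).
Proof.
split; first by case.
move=> no_stop1 uk _ sk0; have vk := Hv k (leqnn k).
have alpha_k0 : 0 < alpha k.
  have xi0 : 0 < xi by case/andP: Hxi.
  apply: (step_sizes_gt0 (s := fun j => v j + u j) xi0 _ _ (leqnn k)).
    by rewrite Ha0.
  by move=> j /Hrun[_ [_ [_ [_ step]]]]; apply: step.
have vkE : v k = - u k by apply/eqP; rewrite -addr_eq0 sk0.
have Jvk : J (x k) *m v k = 0 by rewrite vkE mulmxN uk.1 oppr0.
have JTc0 : JTc c J (x k) = 0.
  by apply: v_spec_JTc_eq0 vk Jvk; rewrite mulr_gt0.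
have ck0 : c (x k) = 0.
  by have [//|/eqP ck_neq0] := eqVneq (c (x k)) 0; case: no_stop1.
have vk0 : v k = 0 := vk.2 JTc0.
have uk0 : u k = 0 by rewrite -oppr0 -vk0 vkE opprK.
rewrite vk0 uk0 in uk; have [y y_sub] := u_spec0_subdiff Hrc alpha_k0 uk.
split=> //; exists y, ((J (x k))^T *m y - g (x k)); split=> //.
by rewrite addrCA subrr addr0 subrr.
Qed.
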